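(* Let $P\subseteq\{\text{monotonic},\text{topped},\text{cufi}\}$ and let $\mathbf{L}_P$ be the least predicate modal logic having all the properties in $P$. Then for every formula $\varphi$: $\varphi\in\mathbf{L}_P$ if and only if $Z\models\varphi$ for every neighborhood frame $Z$ having all the properties in $P$ (models on such frames having constant domains). In particular (for $P=\emptyset$), the least predicate modal logic is sound and complete with respect to the class of all neighborhood frames with constant domains.
   Context: Language: countable set $\mathsf{V}$ of variables, $\top,\bot$, $\land,\neg$, $\forall$, countably many $n$-ary predicate symbols for each $n\in\mathbb{N}$, and $\Box$. A predicate modal logic is a set of formulas containing all theorems of classical predicate logic, closed under substitution, modus ponens, generalization, and the rule $\varphi\equiv\psi\in\mathbf{L}\Rightarrow\Box\varphi\equiv\Box\psi\in\mathbf{L}$. It is monotonic if it contains $\Box(p\land q)\supset\Box p\land\Box q$, topped if it contains $\Box\top$, cufi if it contains $\Box p\land\Box q\supset\Box(p\land q)$. A neighborhood frame is $\langle C,\mathcal{V}\rangle$ with $C\ne\emptyset$, $\mathcal{V}:C\to\mathcal{P}(\mathcal{P}(C))$; monotonic if each $\mathcal{V}(c)$ is upward closed under $\subseteq$, topped if $C\in\mathcal{V}(c)$ for all $c$, cufi if each $\mathcal{V}(c)$ is closed under non-empty finite intersections. A model on $Z=\langle C,\mathcal{V}\rangle$ adds a non-empty domain $\mathcal{D}$ and $\mathcal{I}(c,P)\subseteq\mathcal{D}^n$; truth sets under assignments $\mathcal{A}:\mathsf{V}\to\mathcal{D}$ are classical, with $\forall$ as intersection over $x$-variants and $c\in\|\Box\varphi\|_{\mathcal{A}}$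 iff $\|\varphi\|_{\mathcal{A}}\in\mathcal{V}(c)$. $Z\models\varphi$ means $\|\varphi\|_{\mathcal{A}}=C$ for every model on $Z$ and every assignment. *)

From mathcomp Require Import ssreflect ssrfun ssrbool eqtype ssrnat seq tuple.

Set Implicit Arguments.
Unset Strict Implicit.
Unset Printing Implicit Defensive.

(** Variables are natural numbers, represented with de Bruijn indices:
    [FAll] binds index 0, free variable [i] is referred to as [i + d]
    under [d] binders.  The named quantifier "forall x_j" is [All j] below.
    Predicate symbols: for each arity [n], countably many symbols indexed by
    [k : nat]; [FPred n k ys] is the atom P^n_k(ys). *)
Inductive form : Type :=
| FTop : form
| FBot : form
| FPred : forall (n k : nat), n.-tuple nat -> form
| FAnd : form -> form -> form
| FNeg : form -> form
| FAll : form -> form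
| FBox : form -> form.

Definition FImp (a b : form) : form := FNeg (FAnd a (FNeg b)).
Definition FIff (a b : form) : form := FAnd (FImp a b) (FImp b a).

Definition upren (r : nat -> nat) : nat -> nat :=
  fun i => match i with 0 => 0 | S i' => S (r i') end.

Fixpoint ren (r : nat -> nat) (f : form) : form :=
  match f with
  | FTop => FTop
  | FBot => FBot
  | FPred n k ys => FPred k (map_tuple r ys)
  | FAnd a b => FAnd (ren r a) (ren r b)
  | FNeg a => FNeg (ren r a)
  | FAll a => FAll (ren (upren r) a)
  | FBox a => FBox (ren r a)
  end.

Definition All (j : nat) (f : form) : form :=
  FAll (ren (fun i => if i == j then 0 else S i) f).

(** Substitution of formulas for predicate symbols.  [sg n k] is the formula
    substituted for the n-ary symbol k; in it, variables 0..n-1 stand for the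
    n argument places and variable [n + j] stands for the (free, parameter)
    variable [j].  Parameters are never captured (de Bruijn). *)
Fixpoint psubst (sg : nat -> nat -> form) (d : nat) (f : form) : form :=
  match f with
  | FTop => FTop
  | FBot => FBot
  | FPred n k ys =>
      ren (fun i => if i < n then nth 0 ys i else i - n + d) (sg n k)
  | FAnd a b => FAnd (psubst sg d a) (psubst sg d b)
  | FNeg a => FNeg (psubst sg d a)
  | FAll a => FAll (psubst sg d.+1 a)
  | FBox a => FBox (psubst sg d a)
  end.

Definition subst (sg : nat -> nat -> form) (f : form) : form := psubst sg 0 f.

Definition scons (D : Type) (x : D) (A : nat -> D) : nat -> D :=
  fun i => match i with 0 => x | S i' => A i' end.

Fixpoint boxfree (f : form) : Prop :=
  match f with
  | FTop | FBot | FPred _ _ _ => True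
  | FAnd a b => boxfree a /\ boxfree b
  | FNeg a | FAll a => boxfree a
  | FBox _ => False
  end.

Fixpoint fo_sat (D : Type) (I : forall n : nat, nat -> n.-tuple D -> Prop)
  (A : nat -> D) (f : form) : Prop :=
  match f with
  | FTop => True
  | FBot => False
  | FPred n k ys => I n k (map_tuple A ys)
  | FAnd a b => fo_sat I A a /\ fo_sat I A b
  | FNeg a => ~ fo_sat I A a
  | FAll a => forall x : D, fo_sat I (scons x A) a
  | FBox _ => False
  end.

(** Theorems of classical predicate logic (box-free formulas valid in every
    first-order structure with non-empty domain; by Goedel completeness these
    are exactly the QC-theorems). *)
Definition QC (f : form) : Prop :=
  boxfree f /\
  forall (D : Type) (I : forall n : nat, nat -> n.-tuple D -> Prop) (A : nat -> D),
    inhabited D -> fo_sat I A f.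

Definition is_pml (L : form -> Prop) : Prop :=
  [/\ (forall f, QC f -> L f),
      (forall sg f, L f -> L (subst sg f)),
      (forall f g, L f -> L (FImp f g) -> L g),
      (forall j f, L f -> L (All j f)) &
      (forall f g, L (FIff f g) -> L (FIff (FBox f) (FBox g)))].

Definition prop_p : form := FPred 0 (@nil_tuple nat).
Definition prop_q : form := FPred 1 (@nil_tuple nat).

Definition ax_mono : form :=
  FImp (FBox (FAnd prop_p prop_q)) (FAnd (FBox prop_p) (FBox prop_q)).
Definition ax_top : form := FBox FTop.
Definition ax_cufi : form :=
  FImp (FAnd (FBox prop_p) (FBox prop_q)) (FBox (FAnd prop_p prop_q)).

(** The property set P is encoded by three booleans (monotonic, topped, cufi). *)
Definition logic_has (bm bt bc : bool) (L : form -> Prop) : Prop :=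
  [/\ (bm -> L ax_mono), (bt -> L ax_top) & (bc -> L ax_cufi)].

Definition LP (bm bt bc : bool) (f : form) : Prop :=
  forall L : form -> Prop, is_pml L -> logic_has bm bt bc L -> L f.

Section Semantics.
Variables (C : Type) (V : C -> (C -> Prop) -> Prop).

Definition frame_monotonic : Prop :=
  forall c (X Y : C -> Prop), (forall w, X w -> Y w) -> V c X -> V c Y.
Definition frame_topped : Prop := forall c, V c (fun _ => True).
Definition frame_cufi : Prop :=
  forall c (l : seq (C -> Prop)), l <> [::] ->
    (forall i, i < size l -> V c (nth (fun _ => True) l i)) ->
    V c (fun w => forall i, i < size l -> nth (fun _ => True) l i w).

Definition frame_has (bm bt bc : bool) : Prop :=
  [/\ (bm -> frame_monotonic), (bt -> frame_topped) & (bc -> frame_cufi)].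

Fixpoint sat (D : Type) (I : C -> forall n : nat, nat -> n.-tuple D -> Prop)
  (A : nat -> D) (f : form) : C -> Prop :=
  match f with
  | FTop => fun _ => True
  | FBot => fun _ => False
  | FPred n k ys => fun c => I c n k (map_tuple A ys)
  | FAnd a b => fun c => sat I A a c /\ sat I A b c
  | FNeg a => fun c => ~ sat I A a c
  | FAll a => fun c => forall x : D, sat I (scons x A) a c
  | FBox a => fun c => V c (sat I A a)
  end.

Definition frame_valid (f : form) : Prop :=
  forall (D : Type) (I : C -> forall n : nat, nat -> n.-tuple D -> Prop) (A : nat -> D),
    inhabited D -> forall c : C, sat I A f c.
End Semantics.

From mathcomp Require Import ssreflect ssrfun ssrbool eqtype ssrnat seq tuple choice.
From Stdlib Require Import Classical ClassicalEpsilon FunctionalExtensionality PropExtensionality.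

Set Implicit Arguments.
Unset Strict Implicit.
Unset Printing Implicit Defensive.

(* Soundness: on a fixed frame, validity is closed under the rules of a predicate
   modal logic.  Substituting formulas for predicate symbols amounts to
   reinterpreting each symbol by a truth set, and the rule RE holds because the
   neighbourhood function only sees truth sets; each of the axioms mono, top and
   cufi is valid on the frames with the matching property.

   Completeness is by a canonical model whose constant domain is the set of
   variables.  Its worlds are the maximal L-consistent sets with the Henkin
   property, witnesses being fresh variables.  A set X of worlds is a
   neighbourhood of w when X is the truth set of some chi with [] chi in w (when
   L is monotonic: when X contains such a truth set).  Formulas with the same
   truth set are L-equivalent (every consistent formula lies in some world), so
   RE, resp. the monotonicity rule derived from mono, gives the truth lemma for
   the box; top and cufi transfer from the axioms to the canonical frame. *)

Fixpoint fv_bound (f : form) : nat :=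
  match f with
  | FTop | FBot => 0
  | FPred n k ys => foldr maxn 0 (map S ys)
  | FAnd a b => maxn (fv_bound a) (fv_bound b)
  | FNeg a | FBox a => fv_bound a
  | FAll a => (fv_bound a).-1
  end.

Lemma mem_lt_foldr_max_succ (ys : seq nat) i : i \in ys -> i < foldr maxn 0 (map S ys).
Proof.
elim: ys => [|y ys IH] //=; rewrite in_cons => /orP [/eqP -> | /IH lt_i].
  by rewrite leq_max ltnS leqnn.
by rewrite leq_max lt_i orbT.
Qed.

Lemma eq_ren_fv_bound f r r' :
  (forall i, i < fv_bound f -> r i = r' i) -> ren r f = ren r' f.
Proof.
elim: f r r' => [| |n k ys|a IHa b IHb|a IHa|a IHa|a IHa] r r' Er //=.
- congr FPred; apply: val_inj => /=; apply/eq_in_map => i /mem_lt_foldr_max_succ.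
  exact: Er.
- by rewrite (IHa r r') ?(IHb r r') // => i lt_i; apply: Er; rewrite /= leq_max lt_i ?orbT.
- by rewrite (IHa r r').
- rewrite (IHa (upren r) (upren r')) // => -[|i] //= lt_i; rewrite Er //.
  by rewrite -ltnS (leq_trans lt_i) // -add1n -leq_subLR subn1.
- by rewrite (IHa r r').
Qed.

Lemma eq_ren f r r' : r =1 r' -> ren r f = ren r' f.
Proof. by move=> Er; apply: eq_ren_fv_bound => i _; exact: Er. Qed.

Lemma ren_id f r : r =1 id -> ren r f = f.
Proof.
elim: f r => [| |n k ys|a IHa b IHb|a IHa|a IHa|a IHa] r Er //=.
- by congr FPred; apply: val_inj => /=; rewrite (eq_map Er) map_id.
- by rewrite IHa // IHb.
- by rewrite IHa.
- by rewrite IHa // => -[|i] //=; rewrite Er.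
- by rewrite IHa.
Qed.

Lemma ren_comp f r s : ren r (ren s f) = ren (r \o s) f.
Proof.
elim: f r s => [| |n k ys|a IHa b IHb|a IHa|a IHa|a IHa] r s //=.
- by congr FPred; apply: val_inj => /=; rewrite -map_comp.
- by rewrite IHa IHb.
- by rewrite IHa.
- by rewrite IHa; congr FAll; apply: eq_ren => -[|i].
- by rewrite IHa.
Qed.

(* The renaming that [psubst] applies at depth 0 to a nullary symbol. *)
Lemma ren_nullary_id f :
  ren (fun i => if i < 0 then nth 0 (nil_tuple nat) i else i - 0 + 0) f = f.
Proof. by apply: ren_id => i; rewrite subn0 addn0. Qed.

Definition inst (b : form) (y : nat) : form := ren (scons y id) b.

Lemma All_fresh_inst c b y : fv_bound c <= y -> (fv_bound b).-1 <= y ->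
  All y (FImp c (inst b y)) = FAll (FImp (ren S c) b).
Proof.
move=> le_c le_b; rewrite /All /FImp /= /inst ren_comp.
congr (FAll (FNeg (FAnd _ (FNeg _)))).
- apply: eq_ren_fv_bound => i lt_i; case: eqP => // Ei; subst i.
  by move: (leq_trans lt_i le_c); rewrite ltnn.
- rewrite -[RHS](@ren_id b id) //; apply: eq_ren_fv_bound => -[|i] lt_i /=.
    by rewrite eqxx.
  case: eqP => // Ei; subst i.
  have : y < (fv_bound b).-1 by rewrite -ltnS (leq_trans lt_i) // -add1n -leq_subLR subn1.
  by rewrite ltnNge le_b.
Qed.

Lemma pred_iff_eq (T : Type) (X Y : T -> Prop) : (forall x, X x <-> Y x) -> X = Y.
Proof.
by move=> EXY; apply: functional_extensionality => x; exact: propositional_extensionality.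
Qed.

Lemma nth_cap_cons (T : Type) (X : T -> Prop) (l : seq (T -> Prop)) u :
  (forall i, i < size (X :: l) -> nth (fun _ => True) (X :: l) i u) <->
  X u /\ (forall i, i < size l -> nth (fun _ => True) l i u).
Proof.
split; first by move=> H; split; [exact: (H 0) | move=> i lt_i; exact: (H i.+1)].
by move=> [HX Hl] [|i] //= lt_i; apply: Hl.
Qed.

Section Soundness.
Variables (C : Type) (V : C -> (C -> Prop) -> Prop).

Lemma sat_ext D (I : C -> forall n : nat, nat -> n.-tuple D -> Prop) f A B :
  A =1 B -> forall c, sat V I A f c <-> sat V I B f c.
Proof.
elim: f A B => [| |n k ys|a IHa b IHb|a IHa|a IHa|a IHa] A B EAB c //=.
- by have -> : map_tuple A ys = map_tuple B ys by apply: val_inj; exact: eq_map.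
- by rewrite (IHa A B) // (IHb A B).
- by rewrite (IHa A B).
- have E x : scons x A =1 scons x B by case.
  by split=> H x; [rewrite -(IHa _ _ (E x)) | rewrite (IHa _ _ (E x))].
- by rewrite (pred_iff_eq (IHa A B EAB)).
Qed.

Lemma sat_ren D (I : C -> forall n : nat, nat -> n.-tuple D -> Prop) f A r :
  forall c, sat V I A (ren r f) c <-> sat V I (A \o r) f c.
Proof.
elim: f A r => [| |n k ys|a IHa b IHb|a IHa|a IHa|a IHa] A r c //=.
- by have -> : map_tuple A (map_tuple r ys) = map_tuple (A \o r) ys
    by apply: val_inj; rewrite /= map_comp.
- by rewrite IHa IHb.
- by rewrite IHa.
- have E x : scons x A \o upren r =1 scons x (A \o r) by case.
  by split=> H x; move: (H x); rewrite IHa (sat_ext _ _ (E x)).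
- by rewrite (pred_iff_eq (IHa A r)).
Qed.

(* [d] counts the binders crossed and [A0] is the assignment seen outside them. *)
Lemma sat_psubst D (I : C -> forall n : nat, nat -> n.-tuple D -> Prop) (x0 : D)
    sg (A0 : nat -> D) f d A :
  (forall j, A (j + d) = A0 j) -> forall c,
  sat V I A (psubst sg d f) c <->
  sat V (fun c n k (ds : n.-tuple D) =>
           sat V I (fun i => if i < n then nth x0 ds i else A0 (i - n)) (sg n k) c) A f c.
Proof.
elim: f d A => [| |n k ys|a IHa b IHb|a IHa|a IHa|a IHa] d A EA c //=.
- rewrite sat_ren; apply: sat_ext => i /=.
  by case: ifP => lt_i; [rewrite (nth_map 0) // size_tuple | rewrite EA].
- by rewrite (IHa d A EA) (IHb d A EA).
- by rewrite (IHa d A EA).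
- by split=> H x; move: (H x); rewrite (IHa d.+1) // => j /=; rewrite addnS /= EA.
- by rewrite (pred_iff_eq (IHa d A EA)).
Qed.

Lemma sat_boxfree D (I : C -> forall n : nat, nat -> n.-tuple D -> Prop) f A c :
  boxfree f -> sat V I A f c <-> fo_sat (I c) A f.
Proof.
elim: f A => [| |n k ys|a IHa b IHb|a IHa|a IHa|a IHa] A //=.
- by move=> [bfa bfb]; rewrite IHa // IHb.
- by move=> bfa; rewrite IHa.
- by move=> bfa; split=> H x; [rewrite -IHa | rewrite IHa].
Qed.

Lemma frame_valid_pml : is_pml (frame_valid V).
Proof.
split.
- by move=> f [bf fo] D I A HD c; rewrite sat_boxfree //; exact: fo.
- move=> sg f Hf D I A [x0] c.
  rewrite /subst (@sat_psubst D I x0 sg A f 0 A) => [|j]; last by rewrite addn0.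
  by apply: Hf; exists.
- move=> f g Hf Hfg D I A HD c; move: (Hf D I A HD c) (Hfg D I A HD c) => /=.
  by case: (classic (sat V I A g c)); tauto.
- by move=> j f Hf D I A HD c /= x; rewrite sat_ren; exact: Hf.
- move=> f g Hfg D I A HD c /=.
  have -> : sat V I A f = sat V I A g.
    apply: pred_iff_eq => c'; move: (Hfg D I A HD c') => /=.
    by case: (classic (sat V I A g c')); case: (classic (sat V I A f c')); tauto.
  tauto.
Qed.

Lemma frame_valid_has bm bt bc :
  frame_has V bm bt bc -> logic_has bm bt bc (frame_valid V).
Proof.
case=> Hm Ht Hc; split.
- move=> /Hm mono D I A HD c /= [H1 H2]; apply: H2.
  by split; apply: mono H1 => w /=; tauto.
- by move=> /Ht top D I A HD c /=; exact: top.
- move=> /Hc cufi D I A HD c /= [[H1 H2] H3]; apply: H3.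
  set X := sat V I A prop_p; set Y := sat V I A prop_q.
  have -> : (fun w => X w /\ Y w) =
            (fun w => forall i, i < 2 -> nth (fun _ => True) [:: X; Y] i w).
    apply: pred_iff_eq => w; split => [[HX HY] [|[|i]] //|H].
    by split; [exact: (H 0) | exact: (H 1)].
  by apply: (cufi c [:: X; Y]) => // -[|[|i]].
Qed.

End Soundness.

Lemma LP_sound bm bt bc f : LP bm bt bc f ->
  forall (C : Type) (V : C -> (C -> Prop) -> Prop),
    inhabited C -> frame_has V bm bt bc -> frame_valid V f.
Proof.
by move=> Lf C V _ HV; apply: Lf; [exact: frame_valid_pml | exact: frame_valid_has].
Qed.

Inductive pform := PVar of nat | PTop | PBot | PAnd of pform & pform | PNeg of pform.

Definition PImp (a b : pform) : pform := PNeg (PAnd a (PNeg b)).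

Fixpoint pinst (s : seq form) (t : pform) : form :=
  match t with
  | PVar k => nth FTop s k
  | PTop => FTop
  | PBot => FBot
  | PAnd a b => FAnd (pinst s a) (pinst s b)
  | PNeg a => FNeg (pinst s a)
  end.

Fixpoint patoms (t : pform) : form :=
  match t with
  | PVar k => FPred k (nil_tuple nat)
  | PTop => FTop
  | PBot => FBot
  | PAnd a b => FAnd (patoms a) (patoms b)
  | PNeg a => FNeg (patoms a)
  end.

Fixpoint peval (v : nat -> Prop) (t : pform) : Prop :=
  match t with
  | PVar k => v k
  | PTop => True
  | PBot => False
  | PAnd a b => peval v a /\ peval v b
  | PNeg a => ~ peval v a
  end.

Lemma pinst_subst s t : pinst s t = subst (fun _ k => nth FTop s k) (patoms t).
Proof.
rewrite /subst; elim: t => [k| | |a IHa b IHb|a IHa] //=.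
- by rewrite ren_nullary_id.
- by rewrite IHa IHb.
- by rewrite IHa.
Qed.

Lemma QC_patoms t : (forall v, peval v t) -> QC (patoms t).
Proof.
move=> taut_t; split; first by elim: t {taut_t} => //= a -> b ->.
move=> D I A _; pose v k := I 0 k (map_tuple A (nil_tuple nat)).
suff -> : fo_sat I A (patoms t) <-> peval v t by exact: taut_t.
by elim: t {taut_t} => [k| | |a IHa b IHb|a IHa] /=; rewrite ?IHa ?IHb.
Qed.

Fixpoint encode_form (f : form) : GenTree.tree nat :=
  match f with
  | FTop => GenTree.Node 0 [::]
  | FBot => GenTree.Node 1 [::]
  | FPred n k ys => GenTree.Node 2 [:: GenTree.Leaf n; GenTree.Leaf k;
                                      GenTree.Node 0 (map (@GenTree.Leaf nat) ys)]
  | FAnd a b => GenTree.Node 3 [:: encode_form a; encode_form b]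
  | FNeg a => GenTree.Node 4 [:: encode_form a]
  | FAll a => GenTree.Node 5 [:: encode_form a]
  | FBox a => GenTree.Node 6 [:: encode_form a]
  end.

Lemma encode_form_inj : injective encode_form.
Proof.
have inj_leaf : injective (@GenTree.Leaf nat) by move=> x y [].
elim=> [| |n k ys|a IHa b IHb|a IHa|a IHa|a IHa] [| |n' k' ys'|a' b'|a'|a'|a'] //=.
- case=> En Ek; subst n' k' => /(inj_map inj_leaf) Eys.
  by congr FPred; apply: val_inj.
- by case=> /IHa -> /IHb ->.
- by case=> /IHa ->.
- by case=> /IHa ->.
- by case=> /IHa ->.
Qed.

Lemma form_enumeration : exists en : nat -> form, forall f, exists n, en n = f.
Proof.
pose code f := pickle (encode_form f).
exists (fun n => epsilon (inhabits FTop) (fun f => code f = n)) => f; exists (code f).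
have := epsilon_spec (inhabits FTop) (fun g => code g = code f) (ex_intro _ f erefl).
by move/(pcan_inj (@pickleK _))/encode_form_inj.
Qed.

Definition bigAnd (l : seq form) : form := foldr FAnd FTop l.

Definition neg_all_body (f : form) : option form :=
  if f is FNeg (FAll b) then Some b else None.

Lemma neg_all_bodyP f b : neg_all_body f = Some b -> f = FNeg (FAll b).
Proof. by case: f => // -[] // ? [->]. Qed.

Section Completeness.
Variable L : form -> Prop.
Hypothesis L_pml : is_pml L.

Lemma L_QC f : QC f -> L f.
Proof. by case: L_pml => H _ _ _ _; exact: H. Qed.

Lemma L_subst sg f : L f -> L (subst sg f).
Proof. by case: L_pml => _ H _ _ _; exact: H. Qed.

Lemma L_mp f g : L f -> L (FImp f g) -> L g.
Proof. by case: L_pml => _ _ H _ _; exact: H. Qed.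

Lemma L_gen j f : L f -> L (All j f).
Proof. by case: L_pml => _ _ _ H _; exact: H. Qed.

Lemma L_RE f g : L (FIff f g) -> L (FIff (FBox f) (FBox g)).
Proof. by case: L_pml => _ _ _ _ H; exact: H. Qed.

Lemma L_taut t s : (forall v, peval v t) -> L (pinst s t).
Proof.
by move=> /QC_patoms /L_QC /(L_subst (fun _ k => nth FTop s k)); rewrite pinst_subst.
Qed.

(* Truth tables over the variables 0, 1, 2: no schema below uses more. *)
Ltac L_tauto t s := apply: (@L_taut t s); let v := fresh "v" in move=> v /=;
  case: (classic (v 0)); case: (classic (v 1)); case: (classic (v 2)); tauto.

Lemma L_all_inst b y : L (FImp (FAll b) (inst b y)).
Proof.
pose T := FImp (FAll (FPred 0 [tuple 0])) (FPred 0 [tuple y]).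
have QC_T : QC T.
  split=> // D I A _ /= [H1 H2]; apply: H2.
  by have <- : map_tuple (scons (A y) A) [tuple 0] = map_tuple A [tuple y] by apply: val_inj.
have <- : subst (fun _ _ => b) T = FImp (FAll b) (inst b y).
  rewrite /subst /= /inst; congr (FNeg (FAnd (FAll _) (FNeg _))).
  - by apply: ren_id => -[|i] //=; rewrite subn1 addn1.
  - by apply: eq_ren => -[|i] //=; rewrite subn1 addn0.
exact/L_subst/L_QC.
Qed.

Lemma L_all_imp c b : L (FImp (FAll (FImp (ren S c) b)) (FImp c (FAll b))).
Proof.
pose T := FImp (FAll (FImp (FPred 0 (nil_tuple nat)) (FPred 0 [tuple 0])))
               (FImp (FPred 0 (nil_tuple nat)) (FAll (FPred 0 [tuple 0]))).
have QC_T : QC T.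
  split=> // D I A _ /= [H1 H2]; apply: H2 => -[HP HQ]; apply: HQ => x.
  apply: NNPP => HQx; apply: (H1 x); split=> //.
  by have -> : map_tuple (scons x A) (nil_tuple nat) = map_tuple A (nil_tuple nat)
    by apply: val_inj.
pose sg n (k : nat) := if n is 0 then c else b.
have <- : subst sg T = FImp (FAll (FImp (ren S c) b)) (FImp c (FAll b)).
  rewrite /subst /=.
  congr (FNeg (FAnd (FAll (FNeg (FAnd _ (FNeg _)))) (FNeg (FNeg (FAnd _ (FNeg (FAll _))))))).
  - by apply: eq_ren => i /=; rewrite subn0 addn1.
  - by apply: ren_id => -[|i] //=; rewrite subn1 addn1.
  - exact: ren_nullary_id.
  - by apply: ren_id => -[|i] //=; rewrite subn1 addn1.
exact/L_subst/L_QC.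
Qed.

Definition inconsistent (l : seq form) : Prop := L (FNeg (bigAnd l)).

Lemma L_bigAnd_mem l x : List.In x l -> L (FImp (bigAnd l) x).
Proof.
elim: l => [|y l IH] //= [->|/IH Hx].
  by L_tauto (PImp (PAnd (PVar 0) (PVar 1)) (PVar 0)) [:: x; bigAnd l].
apply: (L_mp Hx).
by L_tauto (PImp (PImp (PVar 1) (PVar 2)) (PImp (PAnd (PVar 0) (PVar 1)) (PVar 2)))
  [:: y; bigAnd l; x].
Qed.

Lemma L_bigAnd_sub l l' :
  (forall x, List.In x l -> List.In x l') -> L (FImp (bigAnd l') (bigAnd l)).
Proof.
elim: l => [|y l IH] /= sub_l; first by L_tauto (PImp (PVar 0) PTop) [:: bigAnd l'].
apply: (L_mp (IH (fun x Hx => sub_l x (or_intror Hx)))).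
apply: (L_mp (L_bigAnd_mem (sub_l y (or_introl erefl)))).
by L_tauto (PImp (PImp (PVar 0) (PVar 1))
  (PImp (PImp (PVar 0) (PVar 2)) (PImp (PVar 0) (PAnd (PVar 1) (PVar 2)))))
  [:: bigAnd l'; y; bigAnd l].
Qed.

Lemma inconsistent_sub l l' :
  inconsistent l -> (forall x, List.In x l -> List.In x l') -> inconsistent l'.
Proof.
move=> incl /L_bigAnd_sub sub_l; apply: (L_mp sub_l); apply: (L_mp incl).
by L_tauto (PImp (PNeg (PVar 0)) (PImp (PImp (PVar 1) (PVar 0)) (PNeg (PVar 1))))
  [:: bigAnd l; bigAnd l'].
Qed.

(* The Henkin witness for [~ forall b] is a variable fresh for everything so far. *)
Definition step (phi : form) (l : seq form) : seq form :=
  if excluded_middle_informative (inconsistent (phi :: l)) then FNeg phi :: l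
  else if neg_all_body phi is Some b
       then FNeg (inst b (fv_bound (bigAnd (phi :: l)))) :: phi :: l
       else phi :: l.

Lemma step_incl phi l x : List.In x l -> List.In x (step phi l).
Proof.
rewrite /step; case: excluded_middle_informative => _ /=; first by tauto.
by case: neg_all_body => /=; tauto.
Qed.

Lemma step_consistent phi l : ~ inconsistent l -> ~ inconsistent (step phi l).
Proof.
rewrite /step => consl; set y := fv_bound (bigAnd (phi :: l)).
case: excluded_middle_informative => incons_phi /=.
  move=> incons_nphi; apply: consl; apply: (L_mp incons_nphi); apply: (L_mp incons_phi).
  by L_tauto (PImp (PNeg (PAnd (PVar 0) (PVar 1)))
    (PImp (PNeg (PAnd (PNeg (PVar 0)) (PVar 1))) (PNeg (PVar 1)))) [:: phi; bigAnd l].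
case Ephi: (neg_all_body phi) => [b|] //; move/neg_all_bodyP: Ephi => Ephi.
move=> incons_wit; apply: incons_phi.
have L_inst : L (FImp (bigAnd (phi :: l)) (inst b y)).
  apply: (L_mp incons_wit).
  by L_tauto (PImp (PNeg (PAnd (PNeg (PVar 0)) (PVar 1))) (PImp (PVar 1) (PVar 0)))
    [:: inst b y; bigAnd (phi :: l)].
have := L_gen y L_inst; rewrite All_fresh_inst //; last first.
  by rewrite /y /= Ephi leq_maxl.
move/L_mp/(_ (L_all_imp _ _)); rewrite /inconsistent /= Ephi => L_all; apply: (L_mp L_all).
by L_tauto (PImp (PImp (PAnd (PNeg (PVar 0)) (PVar 1)) (PVar 0))
  (PNeg (PAnd (PNeg (PVar 0)) (PVar 1)))) [:: FAll b; bigAnd l].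
Qed.

Definition world (G : form -> Prop) : Prop :=
  [/\ forall l, (forall x, List.In x l -> G x) -> ~ inconsistent l,
      forall phi, G phi \/ G (FNeg phi) &
      forall b, G (FNeg (FAll b)) -> exists y, G (FNeg (inst b y))].

Section Lindenbaum.
Variables (en : nat -> form) (th : form).
Hypothesis en_surj : forall f, exists n, en n = f.
Hypothesis th_consistent : ~ inconsistent [:: th].

Fixpoint chain (n : nat) : seq form :=
  if n is n'.+1 then step (en n') (chain n') else [:: th].

Definition chain_union (f : form) : Prop := exists n, List.In f (chain n).

Lemma chain_mono n m x : n <= m -> List.In x (chain n) -> List.In x (chain m).
Proof.
elim: m => [|m IH]; first by rewrite leqn0 => /eqP ->.
rewrite leq_eqVlt => /orP [/eqP -> //| lt_nm] Hx /=.
by apply: step_incl; apply: IH.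
Qed.

Lemma chain_union_consistent l :
  (forall x, List.In x l -> chain_union x) -> ~ inconsistent l.
Proof.
have cons_chain n : ~ inconsistent (chain n) by elim: n => [|n IH] //=; exact: step_consistent.
move=> sub_l; suff [n sub_n] : exists n, forall x, List.In x l -> List.In x (chain n).
  by move=> incl; apply: (cons_chain n); apply: inconsistent_sub incl sub_n.
elim: l sub_l => [|x l IH] sub_l; first by exists 0.
have [n1 Hn1] := sub_l x (or_introl erefl).
have [n2 Hn2] := IH (fun z Hz => sub_l z (or_intror Hz)).
exists (maxn n1 n2) => z /= [<-|Hz].
  by apply: (chain_mono (n := n1)); rewrite ?leq_maxl.
by apply: (chain_mono (n := n2)); [rewrite leq_maxr | apply: Hn2].
Qed.

Lemma chain_union_complete phi : chain_union phi \/ chain_union (FNeg phi).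
Proof.
have [n En] := en_surj phi.
have : chain n.+1 = step phi (chain n) by rewrite /= En.
rewrite /step; case: excluded_middle_informative => incons_phi E.
  by right; exists n.+1; rewrite E; left.
by left; exists n.+1; rewrite E; case: neg_all_body => /=; tauto.
Qed.

Lemma chain_union_henkin b :
  chain_union (FNeg (FAll b)) -> exists y, chain_union (FNeg (inst b y)).
Proof.
move=> Hb; have [n En] := en_surj (FNeg (FAll b)).
have : chain n.+1 = step (FNeg (FAll b)) (chain n) by rewrite /= En.
rewrite /step; case: excluded_middle_informative => incons_b E.
  exfalso; apply: (chain_union_consistent (l := [:: FNeg (FAll b); FNeg (FNeg (FAll b))])).
    by move=> x [<-|[<-|[]]] //; exists n.+1; rewrite E; left.
  by L_tauto (PNeg (PAnd (PNeg (PVar 0)) (PAnd (PNeg (PNeg (PVar 0))) PTop))) [:: FAll b].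
by eexists; exists n.+1; rewrite E; left.
Qed.

End Lindenbaum.

Lemma lindenbaum th : ~ inconsistent [:: th] -> exists G, world G /\ G th.
Proof.
move=> th_cons; have [en en_surj] := form_enumeration.
exists (chain_union en th); split; last by exists 0; left.
split; [exact: chain_union_consistent | exact: chain_union_complete |].
exact: chain_union_henkin.
Qed.

Section World.
Variable G : form -> Prop.
Hypothesis G_world : world G.

Lemma world_thm phi : L phi -> G phi.
Proof.
case: G_world => G_cons G_compl _ L_phi; case: (G_compl phi) => // G_nphi; exfalso.
apply: (G_cons [:: FNeg phi]); first by move=> x [<-|[]].
apply: (L_mp L_phi).
by L_tauto (PImp (PVar 0) (PNeg (PAnd (PNeg (PVar 0)) PTop))) [:: phi].
Qed.

Lemma world_mp a b : G a -> G (FImp a b) -> G b.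
Proof.
case: G_world => G_cons G_compl _ Ga Gab; case: (G_compl b) => // G_nb; exfalso.
apply: (G_cons [:: a; FImp a b; FNeg b]); first by move=> x [<-|[<-|[<-|[]]]].
by L_tauto (PNeg (PAnd (PVar 0) (PAnd (PImp (PVar 0) (PVar 1)) (PAnd (PNeg (PVar 1)) PTop))))
  [:: a; b].
Qed.

Lemma world_neg a : G (FNeg a) <-> ~ G a.
Proof.
case: G_world => G_cons G_compl _; split; last by case: (G_compl a).
move=> G_na Ga; apply: (G_cons [:: a; FNeg a]); first by move=> x [<-|[<-|[]]].
by L_tauto (PNeg (PAnd (PVar 0) (PAnd (PNeg (PVar 0)) PTop))) [:: a].
Qed.

Lemma world_and a b : G (FAnd a b) <-> G a /\ G b.
Proof.
split=> [Gab|[Ga Gb]].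
  split; apply: (world_mp Gab); apply: world_thm.
    by L_tauto (PImp (PAnd (PVar 0) (PVar 1)) (PVar 0)) [:: a; b].
  by L_tauto (PImp (PAnd (PVar 0) (PVar 1)) (PVar 1)) [:: a; b].
apply: (world_mp Gb); apply: (world_mp Ga); apply: world_thm.
by L_tauto (PImp (PVar 0) (PImp (PVar 1) (PAnd (PVar 0) (PVar 1)))) [:: a; b].
Qed.

Lemma world_top : G FTop.
Proof. by apply: world_thm; L_tauto PTop (Nil form). Qed.

Lemma world_bot : ~ G FBot.
Proof.
case: G_world => G_cons _ _ G_bot.
apply: (G_cons [:: FBot]); first by move=> x [<-|[]].
by L_tauto (PNeg (PAnd PBot PTop)) (Nil form).
Qed.

Lemma world_all b : G (FAll b) <-> forall y, G (inst b y).
Proof.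
split=> [Gb y|Ginst]; first by apply: (world_mp Gb); apply/world_thm/L_all_inst.
case: G_world => _ G_compl G_henkin; case: (G_compl (FAll b)) => // /G_henkin [y].
by move/world_neg/(_ (Ginst y)).
Qed.

Lemma world_iff a b : G (FIff a b) -> G a <-> G b.
Proof.
by move/world_and => [Hab Hba]; split=> H; [exact: world_mp H Hab | exact: world_mp H Hba].
Qed.

End World.

Lemma L_imp_of_worlds a b : (forall G, world G -> G a -> G b) -> L (FImp a b).
Proof.
move=> worlds_ab; apply: NNPP => not_L_ab.
have [G [G_world G_nab]] : exists G, world G /\ G (FNeg (FImp a b)).
  apply: lindenbaum => incons_nab; apply: not_L_ab; apply: (L_mp incons_nab).
  by L_tauto (PImp (PNeg (PAnd (PNeg (PImp (PVar 0) (PVar 1))) PTop)) (PImp (PVar 0) (PVar 1)))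
    [:: a; b].
move/(world_neg G_world): G_nab; apply.
have [Ga|/(world_neg G_world) G_na] := classic (G a).
  apply: (world_mp G_world (worlds_ab G G_world Ga)); apply: (world_thm G_world).
  by L_tauto (PImp (PVar 1) (PImp (PVar 0) (PVar 1))) [:: a; b].
apply: (world_mp G_world G_na); apply: (world_thm G_world).
by L_tauto (PImp (PNeg (PVar 0)) (PImp (PVar 0) (PVar 1))) [:: a; b].
Qed.

Lemma L_iff_intro x y : L (FImp x y) -> L (FImp y x) -> L (FIff x y).
Proof.
move=> Lxy Lyx; apply: (L_mp Lyx); apply: (L_mp Lxy).
by L_tauto (PImp (PImp (PVar 0) (PVar 1))
  (PImp (PImp (PVar 1) (PVar 0)) (PAnd (PImp (PVar 0) (PVar 1)) (PImp (PVar 1) (PVar 0)))))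
  [:: x; y].
Qed.

Definition subst_pq (x y : form) (n k : nat) : form := if k is 0 then x else y.

Lemma L_mono_inst x y : L ax_mono -> L (FImp (FBox (FAnd x y)) (FAnd (FBox x) (FBox y))).
Proof. by move/(L_subst (subst_pq x y)); rewrite /subst /= !ren_nullary_id. Qed.

Lemma L_cufi_inst x y : L ax_cufi -> L (FImp (FAnd (FBox x) (FBox y)) (FBox (FAnd x y))).
Proof. by move/(L_subst (subst_pq x y)); rewrite /subst /= !ren_nullary_id. Qed.

Lemma L_mono_rule x y : L ax_mono -> L (FImp x y) -> L (FImp (FBox x) (FBox y)).
Proof.
move=> L_mono Lxy.
have L_x_xy : L (FIff x (FAnd x y)).
  apply: (L_mp Lxy).
  by L_tauto (PImp (PImp (PVar 0) (PVar 1))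
    (PAnd (PImp (PVar 0) (PAnd (PVar 0) (PVar 1))) (PImp (PAnd (PVar 0) (PVar 1)) (PVar 0))))
    [:: x; y].
apply: (L_mp (L_mono_inst x y L_mono)); apply: (L_mp (L_RE L_x_xy)).
by L_tauto (PImp (PAnd (PImp (PVar 0) (PVar 1)) (PImp (PVar 1) (PVar 0)))
  (PImp (PImp (PVar 1) (PAnd (PVar 0) (PVar 2))) (PImp (PVar 0) (PVar 2))))
  [:: FBox x; FBox (FAnd x y); FBox y].
Qed.

Definition cworld : Type := {G : form -> Prop | world G}.

Definition cnbhd (bm : bool) (w : cworld) (X : cworld -> Prop) : Prop :=
  exists2 chi, sval w (FBox chi) &
    if bm then forall u : cworld, sval u chi -> X u
    else forall u : cworld, X u <-> sval u chi.

Definition cinterp (w : cworld) (n k : nat) (ds : n.-tuple nat) : Prop :=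
  sval w (FPred k ds).

Lemma cnbhd_truth_set (bm : bool) (w : cworld) psi (X : cworld -> Prop) :
  (bm -> L ax_mono) ->
  (forall u, X u <-> sval u psi) -> cnbhd bm w X <-> sval w (FBox psi).
Proof.
move=> L_mono EX; split; last by move=> Gw; exists psi; case: bm {L_mono} => // u /EX.
case=> chi w_chi; case: bm L_mono => [L_mono chi_X|_ E_chi].
  apply: (world_mp (svalP w) w_chi); apply/(world_thm (svalP w))/(L_mono_rule (L_mono isT)).
  apply: L_imp_of_worlds => G G_world G_chi.
  exact: (EX (exist _ G G_world)).1 (chi_X (exist _ G G_world) G_chi).
have L_chi_psi : L (FIff chi psi).
  by apply: L_iff_intro; apply: L_imp_of_worlds => G G_world;
    move: (EX (exist _ G G_world)) (E_chi (exist _ G G_world)) => /=; tauto.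
exact: (world_iff (svalP w) (world_thm (svalP w) (L_RE L_chi_psi))).1.
Qed.

Lemma canonical_truth (bm : bool) a : (bm -> L ax_mono) ->
  forall (s : nat -> nat) (w : cworld),
  sat (cnbhd bm) cinterp s a w <-> sval w (ren s a).
Proof.
move=> L_mono; elim: a => [| |n k ys|a IHa b IHb|a IHa|a IHa|a IHa] s w /=.
- by split=> // _; exact: world_top (svalP w).
- by split=> // /(world_bot (svalP w)).
- by [].
- by rewrite IHa IHb (world_and (svalP w)).
- by rewrite IHa (world_neg (svalP w)).
- rewrite (world_all (svalP w)).
  have E x : ren (scons x id) (ren (upren s) a) = ren (scons x s) a
    by rewrite ren_comp; apply: eq_ren => -[|i].
  by split=> H x; move: (H x); rewrite IHa /inst E.
- exact: cnbhd_truth_set (IHa s).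
Qed.

Lemma cnbhd_ext bm w (X Y : cworld -> Prop) :
  cnbhd bm w X -> (forall u, X u <-> Y u) -> cnbhd bm w Y.
Proof.
move=> [chi w_chi chi_X] EXY; exists chi => //.
by case: bm chi_X => chi_X u; rewrite -EXY; apply: chi_X.
Qed.

Lemma cnbhd_and bm w (X Y : cworld -> Prop) : L ax_cufi ->
  cnbhd bm w X -> cnbhd bm w Y -> cnbhd bm w (fun u => X u /\ Y u).
Proof.
move=> L_cufi [c1 w_c1 c1_X] [c2 w_c2 c2_Y]; exists (FAnd c1 c2).
  apply: (world_mp (svalP w) _ (world_thm (svalP w) (L_cufi_inst c1 c2 L_cufi))).
  exact/(world_and (svalP w)).
case: bm c1_X c2_Y => c1_X c2_Y u; rewrite (world_and (svalP u)).
  by case=> /c1_X ? /c2_Y.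
by rewrite c1_X c2_Y.
Qed.

Lemma canonical_frame_has bm bt bc :
  logic_has bm bt bc L -> frame_has (cnbhd bm) bm bt bc.
Proof.
case=> L_mono L_top L_cufi; split.
- move=> bmT; rewrite /frame_monotonic bmT => w X Y XY [chi w_chi chi_X].
  by exists chi => // u /chi_X /XY.
- move=> /L_top L_T w; exists FTop; first exact: (world_thm (svalP w) L_T).
  by case: bm {L_mono} => u //; split=> // _; exact: world_top (svalP u).
- move=> /L_cufi L_C w [//|X l] _.
  elim: l X => [|Y l IH] X Xl.
    by apply: cnbhd_ext (Xl 0 erefl) _ => u; rewrite nth_cap_cons /=; split=> // -[].
  apply: cnbhd_ext (cnbhd_and L_C (Xl 0 erefl) (IH Y (fun i => Xl i.+1))) _ => u.
  by symmetry; apply: nth_cap_cons.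
Qed.

Lemma countermodel bm bt bc f : logic_has bm bt bc L -> ~ L f ->
  exists (C : Type) (V : C -> (C -> Prop) -> Prop),
    [/\ inhabited C, frame_has V bm bt bc & ~ frame_valid V f].
Proof.
move=> L_has not_Lf.
have [G [G_world G_nf]] : exists G, world G /\ G (FNeg f).
  apply: lindenbaum => incons_nf; apply: not_Lf; apply: (L_mp incons_nf).
  by L_tauto (PImp (PNeg (PAnd (PNeg (PVar 0)) PTop)) (PVar 0)) [:: f].
have L_mono : bm -> L ax_mono by case: L_has.
exists cworld, (cnbhd bm); split.
- exact: inhabits (exist _ G G_world).
- exact: canonical_frame_has.
- move=> /(_ nat cinterp id (inhabits 0) (exist _ G G_world)).
  rewrite canonical_truth // ren_id //.
  by move/(world_neg G_world): G_nf.
Qed.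

End Completeness.

Theorem mainTheorem9 (bm bt bc : bool) (f : form) :
  LP bm bt bc f <->
  (forall (C : Type) (V : C -> (C -> Prop) -> Prop),
      inhabited C -> frame_has V bm bt bc -> frame_valid V f).
Proof.
split; first exact: LP_sound.
move=> valid_f L L_pml L_has; apply: NNPP => not_Lf.
have [C [V [inh_C V_has not_valid]]] := countermodel L_pml L_has not_Lf.
exact/not_valid/valid_f.
Qed.
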